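(* There exists a computable function $f:\mathbb{N}\to\mathbb{N}$ such that the following holds. Let $G=(V,E)$ be an undirected graph with pathwidth $w$, let $\varphi$ be an $\mathit{MSO}_2$ formula interpreted over $G$, and let $n=|V|+|E|$ and $k=w+|\varphi|$. Then there exists an ordered binary decision diagram (OBDD) computing $\mathcal{F}_{\varphi,G}$ with at most $f(k)\cdot n$ nodes. (That is, the OBDD size is fixed-parameter linear in $n$ with respect to $k$.)
   Context: $\mathit{MSO}_2$: formulas are interpreted over a graph $G=(V,E)$ with two disjoint universes $U_V=V$ and $U_E=E$. There are four kinds of variables: vertex object variables (values in $V$), edge object variables (values in $E$), vertex set variables (subsets of $V$), edge set variables (subsets of $E$). Atomic formulas: $\mathit{Adj}(v,e)$ (true iff the vertex assigned to $v$ is an endpoint of the edge assigned to $e$); $x=y$ for object variables of the same sort; $x\in Y$ for an object variable and set variable of the same sort. Formulas are closed under $\neg$, $\wedge$ and existential quantification over variables of each kind, with the usual semantics. Size: atomic formulas have size 3, $|\neg\psi|=1+|\psi|$, $|\psi\wedge\rho|=1+|\psi|+|\rho|$, $|(\exists\cdot)\psi|=1+|\psi|$. Decision variables $\mathcal{D}_{\varphi,G}$: $[x=v]$ for each free vertex object variable $x$ of $\varphi$ and $v\in V$; $[x=e]$ for each free edge object variable $x$ and $e\in E$; $[v\in X]$ for each free vertex set variable $X$ and $v\in V$; $[e\in X]$ for each free edge set variable $X$ and $e\in E$. A Boolean assignment $\delta$ to $\mathcal{D}_{\varphi,G}$ is consistent if for every free vertex (resp. edge) object variable $x$ exactly one of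 $[x=u]$, $u\in V$ (resp. $[x=e]$, $e\in E$) is true; it then encodes the assignment $\alpha$ with $\alpha(x)=$ the unique $o$ with $\delta([x=o])=1$ and $\alpha(X)=\{o:\delta([o\in X])=1\}$. $\mathcal{F}_{\varphi,G}$ is the Boolean function on $\mathcal{D}_{\varphi,G}$ whose models are exactly the consistent assignments encoding assignments satisfying $\varphi$ on $G$. An OBDD is a rooted DAG with a unique source, internal decision nodes labeled by variables with a 0-edge and a 1-edge, and leaves labeled $0$ or $1$, such that along every path variables appear in accordance with a fixed strict linear order; it computes a function $f$ if its variables are among those of $f$ and the value obtained by following edges according to an assignment equals $f$ on that assignment. Pathwidth is the minimum width of a tree decomposition whose tree is a path. *)

From mathcomp Require Import all_boot.
Set Implicit Arguments. Unset Strict Implicit. Unset Printing Implicit Defensive.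

Inductive rcode : Type :=
| RZero | RSucc | RProj of nat
| RComp of rcode & seq rcode
| RPrec of rcode & rcode
| RMu of rcode.

Inductive reval : rcode -> seq nat -> nat -> Prop :=
| ev_zero xs : reval RZero xs 0
| ev_succ x xs : reval RSucc (x :: xs) x.+1
| ev_proj i xs : i < size xs -> reval (RProj i) xs (nth 0 xs i)
| ev_comp g hs xs ys y : revals hs xs ys -> reval g ys y -> reval (RComp g hs) xs y
| ev_prec0 g h xs y : reval g xs y -> reval (RPrec g h) (0 :: xs) y
| ev_precS g h n xs y z : reval (RPrec g h) (n :: xs) y ->
    reval h (n :: y :: xs) z -> reval (RPrec g h) (n.+1 :: xs) z
| ev_mu g xs n : reval g (n :: xs) 0 ->
    (forall m, m < n -> exists k, reval g (m :: xs) k.+1) -> reval (RMu g) xs n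
with revals : seq rcode -> seq nat -> seq nat -> Prop :=
| evs_nil xs : revals [::] xs [::]
| evs_cons h hs xs y ys : reval h xs y -> revals hs xs ys -> revals (h :: hs) xs (y :: ys).

Definition computable (f : nat -> nat) : Prop :=
  exists c : rcode, forall n, reval c [:: n] (f n).

Section Graph.
Variables (V E : finType) (src dst : E -> V).

Definition simple_graph : Prop :=
  (forall e, src e != dst e) /\
  (forall e1 e2, [set src e1; dst e1] = [set src e2; dst e2] -> e1 = e2).

Definition incident (v : V) (e : E) : bool := (v == src e) || (v == dst e).

Definition path_decomp (bags : seq {set V}) : Prop :=
  (forall v, exists2 B, B \in bags & v \in B) /\
  (forall e, exists2 B, B \in bags & (src e \in B) && (dst e \in B)) /\
  (forall i j k v, i <= j -> j <= k -> k < size bags ->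
      v \in nth set0 bags i -> v \in nth set0 bags k -> v \in nth set0 bags j).

Definition pd_width (bags : seq {set V}) : nat := (\max_(B <- bags) #|B|).-1.

Definition is_pathwidth (w : nat) : Prop :=
  (exists bags, path_decomp bags /\ pd_width bags = w) /\
  (forall bags, path_decomp bags -> w <= pd_width bags).
End Graph.

(* MSO_2 syntax: four disjoint sorts of variables, each named by nat.  *)
Inductive mso2 : Type :=
| FAdj of nat & nat          (* Adj(v,e): vertex obj var v, edge obj var e *)
| FEqV of nat & nat
| FEqE of nat & nat
| FInV of nat & nat          (* x \in X, vertex obj var, vertex set var *)
| FInE of nat & nat          (* x \in X, edge obj var, edge set var *)
| FNeg of mso2
| FAnd of mso2 & mso2
| FExV of nat & mso2
| FExE of nat & mso2
| FExVS of nat & mso2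
| FExES of nat & mso2.

Fixpoint msize (p : mso2) : nat :=
  match p with
  | FAdj _ _ | FEqV _ _ | FEqE _ _ | FInV _ _ | FInE _ _ => 3
  | FNeg q => (msize q).+1
  | FAnd q r => (msize q + msize r).+1
  | FExV _ q | FExE _ q | FExVS _ q | FExES _ q => (msize q).+1
  end.

Fixpoint freeV (p : mso2) (z : nat) : bool :=
  match p with
  | FAdj x _ => x == z | FEqV x y => (x == z) || (y == z)
  | FEqE _ _ => false | FInV x _ => x == z | FInE _ _ => false
  | FNeg q => freeV q z | FAnd q r => freeV q z || freeV r z
  | FExV x q => (x != z) && freeV q z
  | FExE _ q | FExVS _ q | FExES _ q => freeV q z
  end.
Fixpoint freeE (p : mso2) (z : nat) : bool :=
  match p with
  | FAdj _ y => y == z | FEqV _ _ => false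
  | FEqE x y => (x == z) || (y == z) | FInV _ _ => false | FInE x _ => x == z
  | FNeg q => freeE q z | FAnd q r => freeE q z || freeE r z
  | FExE x q => (x != z) && freeE q z
  | FExV _ q | FExVS _ q | FExES _ q => freeE q z
  end.
Fixpoint freeVS (p : mso2) (z : nat) : bool :=
  match p with
  | FAdj _ _ | FEqV _ _ | FEqE _ _ | FInE _ _ => false | FInV _ X => X == z
  | FNeg q => freeVS q z | FAnd q r => freeVS q z || freeVS r z
  | FExVS X q => (X != z) && freeVS q z
  | FExV _ q | FExE _ q | FExES _ q => freeVS q z
  end.
Fixpoint freeES (p : mso2) (z : nat) : bool :=
  match p with
  | FAdj _ _ | FEqV _ _ | FEqE _ _ | FInV _ _ => false | FInE _ X => X == z
  | FNeg q => freeES q z | FAnd q r => freeES q z || freeES r z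
  | FExES X q => (X != z) && freeES q z
  | FExV _ q | FExE _ q | FExVS _ q => freeES q z
  end.

Definition upd (T : Type) (a : nat -> T) (x : nat) (t : T) : nat -> T :=
  fun y => if y == x then t else a y.

Section Semantics.
Variables (V E : finType) (src dst : E -> V).

(* Assignments: object variables get option values (None = unassigned);
   every variable that is free or bound in the evaluated position is Some. *)
Fixpoint msat (aV : nat -> option V) (aE : nat -> option E)
    (aVS : nat -> {set V}) (aES : nat -> {set E}) (p : mso2) : bool :=
  match p with
  | FAdj x y => if (aV x, aE y) is (Some v, Some e) then incident src dst v e else false
  | FEqV x y => if (aV x, aV y) is (Some a, Some b) then a == b else false
  | FEqE x y => if (aE x, aE y) is (Some a, Some b) then a == b else false
  | FInV x X => if aV x is Some a then a \in aVS X else false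
  | FInE x X => if aE x is Some a then a \in aES X else false
  | FNeg q => ~~ msat aV aE aVS aES q
  | FAnd q r => msat aV aE aVS aES q && msat aV aE aVS aES r
  | FExV x q => [exists v : V, msat (upd aV x (Some v)) aE aVS aES q]
  | FExE x q => [exists e : E, msat aV (upd aE x (Some e)) aVS aES q]
  | FExVS X q => [exists S : {set V}, msat aV aE (upd aVS X S) aES q]
  | FExES X q => [exists S : {set E}, msat aV aE aVS (upd aES X S) q]
  end.

(* Decision variables: [x=v], [x=e], [v in X], [e in X] *)
Definition dvar : Type := ((nat * V) + (nat * E)) + ((nat * V) + (nat * E)).
Definition dObjV x v : dvar := inl (inl (x, v)).
Definition dObjE x e : dvar := inl (inr (x, e)).
Definition dSetV X v : dvar := inr (inl (X, v)).
Definition dSetE X e : dvar := inr (inr (X, e)).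

Definition Dvars (p : mso2) (d : dvar) : bool :=
  match d with
  | inl (inl (x, _)) => freeV p x
  | inl (inr (x, _)) => freeE p x
  | inr (inl (X, _)) => freeVS p X
  | inr (inr (X, _)) => freeES p X
  end.

Definition consistent (p : mso2) (delta : dvar -> bool) : Prop :=
  (forall x, freeV p x -> #|[set v | delta (dObjV x v)]| = 1) /\
  (forall x, freeE p x -> #|[set e | delta (dObjE x e)]| = 1).

(* the assignment encoded by delta (object variables not free in p are
   left unassigned; they are irrelevant) *)
Definition encV (p : mso2) (delta : dvar -> bool) (x : nat) : option V :=
  if freeV p x then [pick v | delta (dObjV x v)] else None.
Definition encE (p : mso2) (delta : dvar -> bool) (x : nat) : option E :=
  if freeE p x then [pick e | delta (dObjE x e)] else None.
Definition encVS (delta : dvar -> bool) (X : nat) : {set V} :=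
  [set v | delta (dSetV X v)].
Definition encES (delta : dvar -> bool) (X : nat) : {set E} :=
  [set e | delta (dSetE X e)].

(* F_{phi,G}(delta) holds iff delta is consistent and encodes a satisfying
   assignment (delta is only inspected on D_{phi,G}) *)
Definition Ffun (p : mso2) (delta : dvar -> bool) : Prop :=
  consistent p delta /\
  msat (encV p delta) (encE p delta) (encVS delta) (encES delta) p.
End Semantics.

(* The fixed strict linear order on variables is given by a duplicate- *)
(* free list [vorder] (earlier = smaller).                             *)
Inductive bdd_node (X : Type) (m : nat) : Type :=
| BLeaf of bool
| BDec of X & 'I_m & 'I_m.   (* variable, 0-child, 1-child *)

Record obdd (X : Type) : Type := OBDD {
  osize : nat;
  oroot : 'I_osize;
  onode : 'I_osize -> bdd_node X osize;
  vorder : seq X }.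
Arguments onode {X} o _.
Arguments oroot {X} o.
Arguments osize {X} o.
Arguments vorder {X} o.

Section OBDD.
Variables (X : eqType) (B : obdd X).

Definition is_child (i j : 'I_(osize B)) : bool :=
  if onode B i is BDec _ lo hi then (j == lo) || (j == hi) else false.

Definition var_of (i : 'I_(osize B)) : option X :=
  if onode B i is BDec x _ _ then Some x else None.

(* well-formed OBDD whose variables are among those of D:
   - unique source: the root has no parent and every other node has one;
   - variables on every edge strictly increase in the order vorder
     (hence along every path, and the graph is acyclic). *)
Definition wf_obdd (D : pred X) : Prop :=
  uniq (vorder B) /\
  (forall i x, var_of i = Some x -> D x /\ x \in vorder B) /\
  (forall i, ~~ is_child i (oroot B)) /\
  (forall j, j != oroot B -> exists i, is_child i j) /\
  (forall i j x y, is_child i j -> var_of i = Some x -> var_of j = Some y ->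
     index x (vorder B) < index y (vorder B)).

Inductive reaches (delta : X -> bool) : 'I_(osize B) -> bool -> Prop :=
| reach_leaf i b : onode B i = BLeaf X (osize B) b -> reaches delta i b
| reach_dec i x lo hi b : onode B i = BDec x lo hi ->
    reaches delta (if delta x then hi else lo) b -> reaches delta i b.

Definition obdd_computes (D : pred X) (F : (X -> bool) -> Prop) : Prop :=
  wf_obdd D /\
  forall delta : X -> bool,
    exists b, reaches delta (oroot B) b /\ (b = true <-> F delta).
End OBDD.

From mathcomp Require Import all_boot zify.
From Stdlib Require Import ClassicalEpsilon FunctionalExtensionality.
Set Implicit Arguments. Unset Strict Implicit. Unset Printing Implicit Defensive.

(* An OBDD for a function F along a variable order needs, at each level l, only one node per
   class of assignments to the first l variables that behave alike under every completion
   (Myhill-Nerode); so it suffices to bound the number of these classes by f(k).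
   Order the decision variables element by element, vertices and edges sorted by the first bag of
   a path decomposition containing them.  A prefix of this order then cuts G so that the vertices
   meeting both sides lie in a single bag, hence number at most w + 1.  By a Feferman-Vaught
   induction on phi, whether phi holds on an assignment glued from a left and a right part
   depends only on a type of the left part ranging over a set of size at most a tower in
   |phi| + w.  Together with the data needed to check that object variables get exactly one
   value and the values on the element currently being split, this bounds the classes per level,
   and there are at most |phi| n + 1 levels. *)

(** * Computability of the bound *)

Fixpoint rconst (n : nat) : rcode :=
  if n is n'.+1 then RComp RSucc [:: rconst n'] else RZero.

Lemma reval_const n xs : reval (rconst n) xs n.
Proof.
elim: n => [|n IH] /=; first exact: ev_zero.
apply: (ev_comp (ys := [:: n])); last exact: ev_succ.
by apply: evs_cons => //; exact: evs_nil.
Qed.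

Lemma revals1 c xs y : reval c xs y -> revals [:: c] xs [:: y].
Proof. by move=> h; apply: evs_cons h (evs_nil _). Qed.

Lemma revals2 c c' xs y y' :
  reval c xs y -> reval c' xs y' -> revals [:: c; c'] xs [:: y; y'].
Proof. by move=> h h'; apply: evs_cons h (revals1 h'). Qed.

Definition radd := RPrec (RProj 0) (RComp RSucc [:: RProj 1]).

Lemma reval_add n m : reval radd [:: n; m] (n + m).
Proof.
elim: n => [|n IH]; first by apply: ev_prec0; exact: (ev_proj (xs := [:: m])).
apply: (ev_precS IH); apply: (ev_comp (ys := [:: n + m])); last exact: ev_succ.
by apply: revals1; exact: (ev_proj (xs := [:: n; n + m; m])).
Qed.

Definition rmul := RPrec RZero (RComp radd [:: RProj 2; RProj 1]).

Lemma reval_mul n m : reval rmul [:: n; m] (n * m).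
Proof.
elim: n => [|n IH]; first by apply: ev_prec0; exact: ev_zero.
apply: (ev_precS IH); apply: (ev_comp (ys := [:: m; n * m])).
  by apply: revals2; [exact: (ev_proj (i := 2) (xs := [:: n; n * m; m]))
                     | exact: (ev_proj (i := 1) (xs := [:: n; n * m; m]))].
by rewrite mulSn; exact: reval_add.
Qed.

Lemma computable_succ : computable succn.
Proof. by exists RSucc => n; exact: ev_succ. Qed.

Lemma computable_comp f g : computable f -> computable g -> computable (f \o g).
Proof.
move=> [cf hf] [cg hg]; exists (RComp cf [:: cg]) => n.
exact: ev_comp (revals1 (hg n)) (hf _).
Qed.

Lemma computable_mul f g : computable f -> computable g ->
  computable (fun n => f n * g n).
Proof.
move=> [cf hf] [cg hg]; exists (RComp rmul [:: cf; cg]) => n.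
exact: ev_comp (revals2 (hf n) (hg n)) (reval_mul _ _).
Qed.

Lemma computable_expn c : computable (expn c).
Proof.
exists (RPrec (rconst 1) (RComp rmul [:: RProj 1; rconst c])); elim=> [|n IH].
  by apply: ev_prec0; exact: reval_const.
apply: (ev_precS IH); apply: (ev_comp (ys := [:: c ^ n; c])).
  by apply: revals2; [exact: (ev_proj (i := 1) (xs := [:: n; c ^ n])) | exact: reval_const].
by rewrite expnSr; exact: reval_mul.
Qed.

(* The doubled exponent makes [tower n.+1] dominate both [tower n ^ 2] and
   [2 ^ tower n * tower n]. *)
Fixpoint tower (n : nat) : nat := if n is n'.+1 then 2 ^ (2 * tower n') else 1.

Lemma computable_tower : computable tower.
Proof.
have [c2 h2] := computable_expn 2.
exists (RPrec (rconst 1) (RComp c2 [:: RComp rmul [:: rconst 2; RProj 1]])).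
elim=> [|n IH]; first by apply: ev_prec0; exact: reval_const.
apply: (ev_precS IH); apply: (ev_comp (ys := [:: 2 * tower n])); last exact: h2.
apply/revals1/(ev_comp (ys := [:: 2; tower n])); last exact: reval_mul.
by apply: revals2; [exact: reval_const | exact: (ev_proj (i := 1) (xs := [:: n; tower n]))].
Qed.

Definition fbound (k : nat) : nat := tower k.+1 * 32 ^ k * k.+1.

Lemma computable_fbound : computable fbound.
Proof.
apply: computable_mul; last exact: computable_succ.
apply: computable_mul; last exact: computable_expn.
exact: computable_comp computable_tower computable_succ.
Qed.

(** * OBDDs from bounded prefix classes *)

Definition asbool (P : Prop) : bool := if excluded_middle_informative P then true else false.

Lemma asboolP P : reflect P (asbool P).
Proof. by rewrite /asbool; case: excluded_middle_informative => h; constructor. Qed.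

Lemma sumn_map_leq (T : eqType) (f : T -> nat) (s : seq T) c :
  (forall x, x \in s -> f x <= c) -> sumn [seq f x | x <- s] <= size s * c.
Proof.
elim: s => //= a s IH h; rewrite mulSn leq_add ?h ?mem_head //.
by apply: IH => x xs; apply: h; rewrite inE xs orbT.
Qed.

Section UndupBy.
Variables (T : eqType) (r : rel T).

Definition undup_by (s : seq T) : seq T :=
  foldr (fun x acc => if has (r x) acc then acc else x :: acc) [::] s.

Lemma mem_undup_by s x : x \in undup_by s -> x \in s.
Proof.
elim: s => //= a s IH; case: ifP => _; first by move/IH; rewrite inE orbC => ->.
by rewrite !inE; case/orP => [->|/IH ->]; rewrite ?orbT.
Qed.

Lemma undup_by_cover s x : reflexive r -> x \in s -> has (r x) (undup_by s).
Proof.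
move=> r_refl; elim: s => //= a s IH; rewrite inE; case/orP => [/eqP ->|/IH h].
  by case: ifP => // _; rewrite /= r_refl.
by case: ifP => // _; rewrite /= h orbT.
Qed.

Lemma pairwise_undup_by s : pairwise (fun x y => ~~ r x y) (undup_by s).
Proof.
elim: s => //= a s IH; case: ifP => // ha; rewrite pairwise_cons IH andbT.
by apply/allP => y yin; apply: contraFN ha => rxy; apply/hasP; exists y.
Qed.
End UndupBy.

Section PrefixClasses.
Variables (X : eqType) (D : pred X) (F : (X -> bool) -> Prop) (ds : seq X) (x0 : X) (c : nat).
Hypothesis ds_uniq : uniq ds.
Hypothesis ds_D : forall x, x \in ds -> D x.
Hypothesis F_ds : forall d d', (forall x, x \in ds -> d x = d' x) -> (F d <-> F d').

Local Notation N := (size ds).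

Definition splice l (d g : X -> bool) x := if x \in take l ds then d x else g x.

Definition prefix_equiv l d d' := forall g, F (splice l d g) <-> F (splice l d' g).

Hypothesis prefix_classes_bounded : forall l,
  exists (T : finType) (tau : (X -> bool) -> T),
    #|T| <= c /\ forall d d', tau d = tau d' -> prefix_equiv l d d'.

Lemma prefix_equiv_sym l d d' : prefix_equiv l d d' -> prefix_equiv l d' d.
Proof. by move=> h g; split => /h. Qed.

Lemma prefix_equiv_trans l d1 d2 d3 :
  prefix_equiv l d1 d2 -> prefix_equiv l d2 d3 -> prefix_equiv l d1 d3.
Proof. by move=> h1 h2 g; split => [/h1/h2|/h2/h1]. Qed.

Lemma prefix_equiv_agree l d1 d2 :
  (forall x, x \in ds -> d1 x = d2 x) -> prefix_equiv l d1 d2.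
Proof. by move=> h g; apply: F_ds => x xds; rewrite /splice; case: ifP => // /mem_take /h. Qed.

Lemma prefix_equiv_full d d' : prefix_equiv N d d' -> F d <-> F d'.
Proof.
have spliceN d1 g : F (splice N d1 g) <-> F d1.
  by apply: F_ds => x xds; rewrite /splice take_size xds.
move=> h; split => [/(spliceN d d).2/h/spliceN|/(spliceN d' d').2/h/spliceN] //.
Qed.

Definition set_var (d : X -> bool) l b : X -> bool :=
  fun x => if x == nth x0 ds l then b else d x.

Lemma set_var_id l d : set_var d l (d (nth x0 ds l)) = d.
Proof. by apply: functional_extensionality => x; rewrite /set_var; case: eqP => // ->. Qed.

Lemma splice_set_var l d g b : l < N ->
  splice l.+1 (set_var d l b) g = splice l d (set_var g l b).
Proof.
move=> lN; apply: functional_extensionality => x.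
rewrite /splice (take_nth x0 lN) -cats1 mem_cat inE /set_var.
have nl : nth x0 ds l \notin take l ds by rewrite in_take ?mem_nth // index_uniq // ltnn.
case: (boolP (x \in take l ds)) => [xin|_] /=; last by case: eqP.
by case: eqP => // ex; move: xin; rewrite ex (negbTE nl).
Qed.

Lemma prefix_equiv_set_var l d d' b : l < N ->
  prefix_equiv l d d' -> prefix_equiv l.+1 (set_var d l b) (set_var d' l b).
Proof. by move=> lN h g; rewrite !splice_set_var //; apply: h. Qed.

Definition of_bits (s : seq bool) : X -> bool := fun x => nth false s (index x ds).

Lemma of_bits_set_nth l s b x : l < N -> x \in ds ->
  of_bits (set_nth false s l b) x = set_var (of_bits s) l b x.
Proof.
move=> lN xds; rewrite /of_bits /set_var nth_set_nth /=.
suff -> : (index x ds == l) = (x == nth x0 ds l) by [].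
by apply/eqP/eqP => [<-|->]; [rewrite nth_index | rewrite index_uniq].
Qed.

Definition prefix_equivb l (s s' : seq bool) := asbool (prefix_equiv l (of_bits s) (of_bits s')).

Lemma prefix_equivb_refl l : reflexive (prefix_equivb l).
Proof. by move=> s; exact/asboolP. Qed.

Lemma prefix_equivb_sym l s s' : prefix_equivb l s s' = prefix_equivb l s' s.
Proof. by apply/asboolP/asboolP => /prefix_equiv_sym. Qed.

Lemma size_pairwise_inequiv l s :
  pairwise (fun a b => ~~ prefix_equivb l a b) s -> size s <= c.
Proof.
move=> pw; have [T [tau [Tc Htau]]] := prefix_classes_bounded l.
apply: leq_trans Tc; rewrite -(size_map (tau \o of_bits)).
suff /card_uniqP <- : uniq [seq (tau \o of_bits) a | a <- s] by exact: max_card.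
elim: s pw => //= a s IH /andP [ha pw]; rewrite IH // andbT.
apply/mapP => -[b bin /Htau eb]; move: (allP ha b bin).
by move/negP; apply; apply/asboolP.
Qed.

(* Representatives of the classes of [prefix_equiv l], each a bit list of length N. *)
Fixpoint reps l : seq (seq bool) :=
  if l is l'.+1 then
    undup_by (prefix_equivb l) [seq set_nth false s l' b | s <- reps l', b <- [:: false; true]]
  else [:: nseq N false].

Lemma pairwise_reps l : pairwise (fun a b => ~~ prefix_equivb l a b) (reps l).
Proof. by case: l => [|l] //=; exact: pairwise_undup_by. Qed.

Lemma size_reps l : size (reps l) <= c.
Proof. exact: size_pairwise_inequiv (pairwise_reps l). Qed.

Lemma reps_extend l s b : s \in reps l ->
  has (prefix_equivb l.+1 (set_nth false s l b)) (reps l.+1).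
Proof.
move=> sin; apply: undup_by_cover; first exact: prefix_equivb_refl.
by apply/allpairsP; exists (s, b); case: b.
Qed.

Lemma reps_parent l s : s \in reps l.+1 ->
  exists2 s', s' \in reps l & exists b, s = set_nth false s' l b.
Proof. by move/mem_undup_by/allpairsP => [[s' b] /= [s'in _ ->]]; exists s'; last exists b. Qed.

Definition nodes : seq (nat * seq bool) := [seq (l, s) | l <- iota 0 N.+1, s <- reps l].

Lemma mem_nodes l s : ((l, s) \in nodes) = (l <= N) && (s \in reps l).
Proof.
apply/allpairsPdep/andP => [[l' [s' [l'in s'in [-> ->]]]]|[lN sin]].
  by move: l'in; rewrite mem_iota add0n ltnS.
by exists l, s; rewrite mem_iota add0n ltnS.
Qed.

Lemma size_nodes : size nodes <= c * N.+1.
Proof.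
rewrite size_allpairs_dep mulnC -{2}(size_iota 0 N.+1); apply: sumn_map_leq => l.
by move=> _; exact: size_reps.
Qed.

Definition node0 : nat * seq bool := (0, [::]).
Local Notation node i := (nth node0 nodes i).

Lemma node_mem (i : 'I_(size nodes)) : node i \in nodes.
Proof. exact: mem_nth. Qed.

Lemma node_level (i : 'I_(size nodes)) : (node i).1 <= N.
Proof. by have := node_mem i; case: (node i) => l s; rewrite mem_nodes => /andP []. Qed.

Lemma node_rep (i : 'I_(size nodes)) : (node i).2 \in reps (node i).1.
Proof. by have := node_mem i; case: (node i) => l s; rewrite mem_nodes => /andP []. Qed.

Lemma size_nodes_gt0 : 0 < size nodes. Proof. by []. Qed.

Definition root : 'I_(size nodes) := Ordinal size_nodes_gt0.

Lemma root_node : node root = (0, nseq N false). Proof. by []. Qed.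

Lemma pairwise_nodes : pairwise (fun q q' => (q.1 != q'.1) || ~~ prefix_equivb q.1 q.2 q'.2) nodes.
Proof.
rewrite /nodes; elim: (iota 0 N.+1) (iota_uniq 0 N.+1) => //= a ls IH /andP [ains u].
rewrite pairwise_cat IH // andbT; apply/andP; split.
  apply/allrelP => q q' /mapP [s _ ->] /allpairsPdep [l [s' [lin _ ->]]] /=.
  by case: eqP => // eal; rewrite eal lin in ains.
by rewrite pairwise_map; apply: sub_pairwise (pairwise_reps a) => x y /=; rewrite eqxx.
Qed.

Lemma node_inj (i j : 'I_(size nodes)) : (node i).1 = (node j).1 ->
  prefix_equivb (node i).1 (node i).2 (node j).2 -> i = j.
Proof.
move=> el ev; apply: val_inj; move: pairwise_nodes => /(pairwiseP node0) pw.
case: (ltngtP i j) => // ij.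
  by have := pw i j (ltn_ord i) (ltn_ord j) ij; rewrite el eqxx /= -el ev.
by have := pw j i (ltn_ord j) (ltn_ord i) ij; rewrite el eqxx /= prefix_equivb_sym -el ev.
Qed.

Definition is_successor (q : nat * seq bool) b (q' : nat * seq bool) :=
  (q'.1 == q.1.+1) && prefix_equivb q.1.+1 q'.2 (set_nth false q.2 q.1 b).

Definition successor q b : 'I_(size nodes) := insubd root (find (is_successor q b) nodes).

Lemma successorP (i : 'I_(size nodes)) b : (node i).1 < N ->
  (node (successor (node i) b)).1 = (node i).1.+1 /\
  prefix_equivb (node i).1.+1 (node (successor (node i) b)).2
    (set_nth false (node i).2 (node i).1 b).
Proof.
move=> lN; set q := node i.
have : has (is_successor q b) nodes.
  have /hasP [s' s'in e] := reps_extend b (node_rep i).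
  apply/hasP; exists (q.1.+1, s'); first by rewrite mem_nodes lN.
  by rewrite /is_successor eqxx prefix_equivb_sym.
move=> h; have fl : find (is_successor q b) nodes < size nodes by rewrite -has_find.
by rewrite /successor val_insubd fl; have /andP [/eqP -> ] := nth_find node0 h.
Qed.

Definition obdd_node (i : 'I_(size nodes)) : bdd_node X (size nodes) :=
  let q := node i in
  if q.1 < N then BDec (nth x0 ds q.1) (successor q false) (successor q true)
  else BLeaf X (size nodes) (asbool (F (of_bits q.2))).

Definition canonical_obdd : obdd X := @OBDD X (size nodes) root obdd_node ds.

Lemma child_level (i j : 'I_(size nodes)) : @is_child _ canonical_obdd i j ->
  (node i).1 < N /\ (node j).1 = (node i).1.+1.
Proof.
rewrite /is_child /= /obdd_node; case: ifP => // lN /orP [] /eqP ->.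
  by have [-> _] := successorP false lN.
by have [-> _] := successorP true lN.
Qed.

Lemma var_of_canonical (i : 'I_(size nodes)) x : @var_of _ canonical_obdd i = Some x ->
  (node i).1 < N /\ x = nth x0 ds (node i).1.
Proof. by rewrite /var_of /= /obdd_node; case: ifP => // lN [<-]. Qed.

Lemma has_parent (j : 'I_(size nodes)) : j != root -> exists i, @is_child _ canonical_obdd i j.
Proof.
move=> jr; case ql: (node j).1 => [|l].
  case/eqP: jr; apply: node_inj; rewrite ql //.
  by have := node_rep j; rewrite ql inE => /eqP ->; exact: prefix_equivb_refl.
have /reps_parent [s' s'in [b eb]] : (node j).2 \in reps l.+1 by rewrite -ql node_rep.
have lN : l.+1 <= N by rewrite -ql node_level.
have pi : index (l, s') nodes < size nodes by rewrite index_mem mem_nodes s'in ltnW.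
have ei : node (Ordinal pi) = (l, s') by rewrite nth_index // mem_nodes s'in ltnW.
exists (Ordinal pi); rewrite /is_child /= /obdd_node ei /= lN.
have [] := @successorP (Ordinal pi) b; rewrite ei //= => k1 k2.
suff ej : successor (l, s') b = j by case: b {eb k1 k2} ej => ->; rewrite eqxx ?orbT.
by apply: node_inj; rewrite k1 ?ql // eb.
Qed.

Lemma wf_canonical_obdd : wf_obdd canonical_obdd D.
Proof.
split; first exact: ds_uniq.
split.
  by move=> i x /var_of_canonical [lN ->]; have m := mem_nth x0 lN; split => //; apply: ds_D.
split.
  by move=> i; apply/negP => /child_level [_]; rewrite root_node.
split; first exact: has_parent.
move=> i j x y /child_level [_ ej] /var_of_canonical [lN ->] /var_of_canonical [lN' ->].
by rewrite !index_uniq // ej.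
Qed.

Lemma reaches_canonical delta n (i : 'I_(size nodes)) : N - (node i).1 = n ->
  prefix_equiv (node i).1 (of_bits (node i).2) delta ->
  @reaches _ canonical_obdd delta i (asbool (F delta)).
Proof.
elim: n i => [|n IH] i hn he.
  have eN : (node i).1 = N by apply/eqP; rewrite eqn_leq node_level -subn_eq0 hn.
  apply: reach_leaf; rewrite /= /obdd_node eN ltnn; congr BLeaf.
  by rewrite eN in he; apply/asboolP/asboolP => /(prefix_equiv_full he).
have lN : (node i).1 < N by rewrite -subn_gt0 hn.
set b := delta (nth x0 ds (node i).1).
apply: (@reach_dec _ canonical_obdd delta i (nth x0 ds (node i).1)
  (successor (node i) false) (successor (node i) true)); first by rewrite /= /obdd_node lN.
rewrite (_ : (if b then _ else _) = successor (node i) b); last by case: (b).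
have [k1 /asboolP k2] := successorP b lN.
apply: IH; first by rewrite k1 subnS hn.
rewrite k1; apply: (prefix_equiv_trans k2).
apply: (@prefix_equiv_trans _ _ (set_var (of_bits (node i).2) (node i).1 b)).
  by apply: prefix_equiv_agree => x xds; apply: of_bits_set_nth.
by rewrite -[X in prefix_equiv _ _ X](set_var_id (node i).1 delta); exact: prefix_equiv_set_var.
Qed.

Lemma canonical_obdd_computes : obdd_computes canonical_obdd D F.
Proof.
split; first exact: wf_canonical_obdd.
move=> delta; exists (asbool (F delta)); split; last by split => /asboolP.
by apply: (@reaches_canonical delta (N - 0) root) => // g; rewrite /splice take0.
Qed.
End PrefixClasses.

Lemma obdd_of_prefix_classes (X : eqType) (D : pred X) (F : (X -> bool) -> Prop)
    (ds : seq X) (x0 : X) (c : nat) :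
  uniq ds -> (forall x, x \in ds -> D x) ->
  (forall d d', (forall x, x \in ds -> d x = d' x) -> (F d <-> F d')) ->
  (forall l, exists (T : finType) (tau : (X -> bool) -> T),
     #|T| <= c /\ forall d d', tau d = tau d' -> prefix_equiv F ds l d d') ->
  exists B : obdd X, obdd_computes B D F /\ osize B <= c * (size ds).+1.
Proof.
move=> u hD hF hl; exists (canonical_obdd F ds x0); split; first exact: canonical_obdd_computes.
exact: size_nodes hl.
Qed.

(** * Free variables of MSO2 formulas *)

Lemma msat_eq_free (V E : finType) (src dst : E -> V) p :
  forall aV aE aVS aES aV' aE' aVS' aES',
  (forall z, freeV p z -> aV z = aV' z) -> (forall z, freeE p z -> aE z = aE' z) ->
  (forall z, freeVS p z -> aVS z = aVS' z) -> (forall z, freeES p z -> aES z = aES' z) ->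
  msat src dst aV aE aVS aES p = msat src dst aV' aE' aVS' aES' p.
Proof.
elim: p => [x y|x y|x y|x X|x X|q IH|q IHq r IHr|x q IH|x q IH|X q IH|X q IH]
  aV aE aVS aES aV' aE' aVS' aES' hV hE hVS hES /=.
- by rewrite (hV x (eqxx _)) (hE y (eqxx _)).
- by rewrite (hV x) /= ?eqxx // (hV y) /= ?eqxx ?orbT.
- by rewrite (hE x) /= ?eqxx // (hE y) /= ?eqxx ?orbT.
- by rewrite (hV x (eqxx _)) (hVS X (eqxx _)).
- by rewrite (hE x (eqxx _)) (hES X (eqxx _)).
- by rewrite (IH _ _ _ _ aV' aE' aVS' aES').
- congr (_ && _); [apply: IHq | apply: IHr] => z hz;
  (first [apply: hV | apply: hE | apply: hVS | apply: hES]); by rewrite /= hz ?orbT.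
all: apply: eq_existsb => t; apply: IH => // z hz; rewrite /upd; case: eqP => // nz;
  first [apply: hV | apply: hE | apply: hVS | apply: hES];
  by rewrite /= hz andbT; apply/eqP => e; apply: nz; rewrite e.
Qed.

Fixpoint var_bound (p : mso2) : nat :=
  match p with
  | FAdj x y | FEqV x y | FEqE x y | FInV x y | FInE x y => (maxn x y).+1
  | FNeg q => var_bound q
  | FAnd q r => maxn (var_bound q) (var_bound r)
  | FExV _ q | FExE _ q | FExVS _ q | FExES _ q => var_bound q
  end.

Lemma free_lt_var_bound p z :
  [|| freeV p z, freeE p z, freeVS p z | freeES p z] -> z < var_bound p.
Proof.
elim: p => [x y|x y|x y|x X|x X|q IH|q IHq r IHr|x q IH|x q IH|X q IH|X q IH] /=;
  rewrite ?orbF; try by case/orP => /eqP <-; lia.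
- exact: IH.
- move=> /or4P [] /orP [] h; rewrite leq_max; apply/orP;
  by [left; apply: IHq; rewrite h ?orbT | right; apply: IHr; rewrite h ?orbT].
all: by move=> /or4P [] h; apply: IH; first [case/andP: h => _ -> | rewrite h]; rewrite ?orbT.
Qed.

Lemma count_eq_le1 (s : seq nat) x : uniq s -> count (fun z => x == z) s <= 1.
Proof.
move=> u; rewrite (eq_count (a2 := pred1 x)); last by move=> z; rewrite /= eq_sym.
by rewrite count_uniq_mem //; case: (x \in s).
Qed.

Lemma count_orb_le (T : Type) (s : seq T) (a1 a2 : pred T) :
  count (fun z => a1 z || a2 z) s <= count a1 s + count a2 s.
Proof. by rewrite -(count_predUI a1 a2) leq_addr. Qed.

Lemma count_andb_le (T : Type) (s : seq T) (a1 a2 : pred T) :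
  count (fun z => a1 z && a2 z) s <= count a2 s.
Proof. by apply: sub_count => z /andP []. Qed.

Lemma count_free_vertex p s : uniq s -> count (freeV p) s + count (freeVS p) s <= msize p.
Proof.
move=> u; elim: p => [x y|x y|x y|x X|x X|q IH|q IHq r IHr|x q IH|x q IH|X q IH|X q IH] /=;
  rewrite ?count_pred0 ?addn0 ?add0n //; try exact: leq_trans IH _.
- exact: leq_trans (count_eq_le1 x u) _.
- apply: leq_trans (count_orb_le s _ _) _.
  exact: leq_trans (leq_add (count_eq_le1 x u) (count_eq_le1 y u)) _.
- exact: leq_trans (leq_add (count_eq_le1 x u) (count_eq_le1 X u)) _.
- apply: leq_trans (leq_add (count_orb_le s _ _) (count_orb_le s _ _)) _.
  by rewrite addnACA; apply: leq_trans (leq_add IHq IHr) _.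
- exact: leq_trans (leq_add (count_andb_le s _ _) (leqnn _)) (leq_trans IH _).
- exact: leq_trans (leq_add (leqnn _) (count_andb_le s _ _)) (leq_trans IH _).
Qed.

Lemma count_free_edge p s : uniq s -> count (freeE p) s + count (freeES p) s <= msize p.
Proof.
move=> u; elim: p => [x y|x y|x y|x X|x X|q IH|q IHq r IHr|x q IH|x q IH|X q IH|X q IH] /=;
  rewrite ?count_pred0 ?addn0 ?add0n //; try exact: leq_trans IH _.
- exact: leq_trans (count_eq_le1 y u) _.
- apply: leq_trans (count_orb_le s _ _) _.
  exact: leq_trans (leq_add (count_eq_le1 x u) (count_eq_le1 y u)) _.
- exact: leq_trans (leq_add (count_eq_le1 x u) (count_eq_le1 X u)) _.
- apply: leq_trans (leq_add (count_orb_le s _ _) (count_orb_le s _ _)) _.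
  by rewrite addnACA; apply: leq_trans (leq_add IHq IHr) _.
- exact: leq_trans (leq_add (count_andb_le s _ _) (leqnn _)) (leq_trans IH _).
- exact: leq_trans (leq_add (leqnn _) (count_andb_le s _ _)) (leq_trans IH _).
Qed.

(** * Gluing assignments along a cut *)

Definition keep_in (T : Type) (P : pred T) (o : option T) : option T :=
  if o is Some t then (if P t then Some t else None) else None.

Variant keep_in_spec (T : Type) (P : pred T) : option T -> Type :=
  | KeepSome t of P t : keep_in_spec P (Some t)
  | KeepNone : keep_in_spec P None.

Lemma keep_inP (T : Type) (P : pred T) o : keep_in_spec P (keep_in P o).
Proof. by case: o => [t|] /=; [case: ifP => pt; constructor | constructor]. Qed.

Definition glue_opt (T : Type) (P : pred T) (o o' : option T) : option T :=
  if keep_in P o is Some t then Some t else keep_in (predC P) o'.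

Definition glue_set (T : finType) (P : pred T) (A A' : {set T}) : {set T} :=
  (A :&: [set t | P t]) :|: (A' :\: [set t | P t]).

Definition opt_eq (T : eqType) (o o' : option T) : bool :=
  if (o, o') is (Some t, Some t') then t == t' else false.

Lemma glue_opt_eq (T : eqType) (P : pred T) (o1 o1' o2 o2' r1 r2 : option T) :
  (keep_in P o1 == None) = (keep_in P o1' == None) ->
  (keep_in P o2 == None) = (keep_in P o2' == None) ->
  opt_eq (keep_in P o1) (keep_in P o2) = opt_eq (keep_in P o1') (keep_in P o2') ->
  opt_eq (glue_opt P o1 r1) (glue_opt P o2 r2) = opt_eq (glue_opt P o1' r1) (glue_opt P o2' r2).
Proof.
rewrite /glue_opt.
case: (keep_inP P o1) => [v pv|]; case: (keep_inP P o1') => [v' pv'|] //;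
case: (keep_inP P o2) => [e pe|]; case: (keep_inP P o2') => [e' pe'|] //= _ _ h //.
- case: (keep_inP (predC P) r2) => [w /negbTE nPw|] //; rewrite /opt_eq.
  have -> : (v == w) = false by apply/eqP => ew; rewrite -ew pv in nPw.
  by have -> : (v' == w) = false by apply/eqP => ew; rewrite -ew pv' in nPw.
- case: (keep_inP (predC P) r1) => [w /negbTE nPw|] //; rewrite /opt_eq.
  have -> : (w == e) = false by apply/eqP => ew; rewrite ew pe in nPw.
  by have -> : (w == e') = false by apply/eqP => ew; rewrite ew pe' in nPw.
Qed.

Lemma glue_opt_mem (T : finType) (P : pred T) (o o' r : option T) (A A' C : {set T}) :
  (keep_in P o == None) = (keep_in P o' == None) ->
  (if keep_in P o is Some t then t \in A else false) =
    (if keep_in P o' is Some t then t \in A' else false) ->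
  (if glue_opt P o r is Some t then t \in glue_set P A C else false) =
    (if glue_opt P o' r is Some t then t \in glue_set P A' C else false).
Proof.
rewrite /glue_opt /glue_set.
case: (keep_inP P o) => [v pv|]; case: (keep_inP P o') => [v' pv'|] //= _ h.
  by rewrite !inE pv pv' !andbT /= !orbF.
case: (keep_inP (predC P) r) => [w /negbTE nPw|] //.
by rewrite !inE nPw !andbF.
Qed.

Section Assignments.
Variables (V E : finType) (src dst : E -> V).

Record asg := Asg { aV : nat -> option V; aE : nat -> option E;
                    aVS : nat -> {set V}; aES : nat -> {set E} }.

Definition sat (a : asg) p := msat src dst (aV a) (aE a) (aVS a) (aES a) p.

Definition setV (a : asg) x o := Asg (upd (aV a) x o) (aE a) (aVS a) (aES a).
Definition setE (a : asg) x o := Asg (aV a) (upd (aE a) x o) (aVS a) (aES a).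
Definition setVS (a : asg) X A := Asg (aV a) (aE a) (upd (aVS a) X A) (aES a).
Definition setES (a : asg) X A := Asg (aV a) (aE a) (aVS a) (upd (aES a) X A).

Section Gluing.
Variables (PV : pred V) (PE : pred E).

(* [glue a c] reads the left part (vertices in [PV], edges in [PE]) from [a] and the rest
   from [c]. *)
Definition glue (a c : asg) : asg :=
  Asg (fun z => glue_opt PV (aV a z) (aV c z)) (fun z => glue_opt PE (aE a z) (aE c z))
      (fun z => glue_set PV (aVS a z) (aVS c z)) (fun z => glue_set PE (aES a z) (aES c z)).

Definition determines (T : Type) (tau : asg -> T) p :=
  forall a a', tau a = tau a' -> forall c, sat (glue a c) p = sat (glue a' c) p.

Definition types_bounded n p :=
  exists (T : finType) (tau : asg -> T), #|T| <= n /\ determines tau p.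

Lemma types_bounded_le m n p : m <= n -> types_bounded m p -> types_bounded n p.
Proof. by move=> mn [T [tau [hT h]]]; exists T, tau; split => //; exact: leq_trans mn. Qed.

Lemma types_bounded_eq (T : finType) (P : pred T) (proj : asg -> nat -> option T) p x y :
  (forall a, sat a p = opt_eq (proj a x) (proj a y)) ->
  (forall a c z, proj (glue a c) z = glue_opt P (proj a z) (proj c z)) ->
  types_bounded 8 p.
Proof.
move=> satE projE; exists _, (fun a => (keep_in P (proj a x) == None,
  keep_in P (proj a y) == None, opt_eq (keep_in P (proj a x)) (keep_in P (proj a y)))).
split; first by rewrite !card_prod !card_bool.
by move=> a a' [h1 h2 h3] c; rewrite !satE !projE; apply: glue_opt_eq.
Qed.

Lemma types_bounded_mem (T : finType) (P : pred T) (proj : asg -> nat -> option T)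
    (projS : asg -> nat -> {set T}) p x X :
  (forall a, sat a p = if proj a x is Some t then t \in projS a X else false) ->
  (forall a c z, proj (glue a c) z = glue_opt P (proj a z) (proj c z)) ->
  (forall a c z, projS (glue a c) z = glue_set P (projS a z) (projS c z)) ->
  types_bounded 4 p.
Proof.
move=> satE projE projSE; exists _, (fun a => (keep_in P (proj a x) == None,
  if keep_in P (proj a x) is Some t then t \in projS a X else false)).
split; first by rewrite !card_prod !card_bool.
by move=> a a' [h1 h2] c; rewrite !satE !projE !projSE; apply: glue_opt_mem.
Qed.

Lemma types_bounded_neg n q : types_bounded n q -> types_bounded n (FNeg q).
Proof. move=> [T [tau [hT hR]]]; exists T, tau; split => // a a' e c.
by have := hR a a' e c; rewrite /sat /= => ->. Qed.

Lemma types_bounded_and n m q r :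
  types_bounded n q -> types_bounded m r -> types_bounded (n * m) (FAnd q r).
Proof.
move=> [T1 [tau1 [hT1 hR1]]] [T2 [tau2 [hT2 hR2]]].
exists _, (fun a => (tau1 a, tau2 a)); split; first by rewrite card_prod leq_mul.
by move=> a a' [e1 e2] c; have := hR1 a a' e1 c; have := hR2 a a' e2 c; rewrite /sat /= => -> ->.
Qed.

Lemma types_bounded_exists_obj (T : finType) (P : pred T) (set_obj : asg -> option T -> asg)
    n p q :
  (forall a, sat a p = [exists t, sat (set_obj a (Some t)) q]) ->
  (forall a c t, P t -> set_obj (glue a c) (Some t) = glue (set_obj a (Some t)) c) ->
  (forall a c t, ~~ P t ->
     set_obj (glue a c) (Some t) = glue (set_obj a None) (set_obj c (Some t))) ->
  types_bounded n q -> types_bounded (2 ^ n * n) p.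
Proof.
move=> satE glue_in glue_out [T1 [tau [hT1 hR]]].
pose sig a := ([ffun t1 => [exists t, P t && (tau (set_obj a (Some t)) == t1)]],
               tau (set_obj a None)).
exists _, sig; split.
  by rewrite card_prod card_ffun card_bool leq_mul // leq_exp2l.
suff imp a a' : sig a = sig a' -> forall c, sat (glue a c) p -> sat (glue a' c) p.
  by move=> a a' e c; apply/idP/idP; [exact: imp | exact: imp (esym e) c].
rewrite /sig => -[hf hn] c; rewrite !satE => /existsP [t st]; apply/existsP.
have [pt|pt] := boolP (P t); last first.
  by rewrite glue_out // in st; exists t; rewrite glue_out // -(hR _ _ hn).
rewrite glue_in // in st.
have := congr1 (fun f : {ffun T1 -> bool} => f (tau (set_obj a (Some t)))) hf; rewrite !ffunE.
have -> : [exists t0, P t0 && (tau (set_obj a (Some t0)) == tau (set_obj a (Some t)))].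
  by apply/existsP; exists t; rewrite pt eqxx.
move/esym/existsP => [t' /andP [pt' /eqP et']].
by exists t'; rewrite glue_in // (hR _ _ et').
Qed.

Lemma types_bounded_exists_set (S : finType) (set_set : asg -> S -> asg) n p q :
  (forall a, sat a p = [exists A, sat (set_set a A) q]) ->
  (forall a c A, set_set (glue a c) A = glue (set_set a A) (set_set c A)) ->
  (forall a c A A', exists A'', glue (set_set a A') (set_set c A) = set_set (glue a c) A'') ->
  types_bounded n q -> types_bounded (2 ^ n) p.
Proof.
move=> satE glue_set_set glue_mixed [T1 [tau [hT1 hR]]].
pose sig a := [ffun t1 => [exists A, tau (set_set a A) == t1]].
exists _, sig; split; first by rewrite card_ffun card_bool leq_exp2l.
suff imp a a' : sig a = sig a' -> forall c, sat (glue a c) p -> sat (glue a' c) p.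
  by move=> a a' e c; apply/idP/idP; [exact: imp | exact: imp (esym e) c].
move=> hf c; rewrite !satE => /existsP [A]; rewrite glue_set_set => st.
have := congr1 (fun f : {ffun T1 -> bool} => f (tau (set_set a A))) hf; rewrite !ffunE.
have -> : [exists A0, tau (set_set a A0) == tau (set_set a A)] by apply/existsP; exists A.
move/esym/existsP => [A' /eqP eA'].
have [A'' eA''] := glue_mixed a' c A A'.
by apply/existsP; exists A''; rewrite -eA'' (hR _ _ eA').
Qed.

Variable b : nat.

Definition left_boundary : {set V} :=
  [set v | PV v && [exists e, ~~ PE e && incident src dst v e]].
Definition right_boundary : {set V} :=
  [set v | ~~ PV v && [exists e, PE e && incident src dst v e]].

Hypothesis left_boundary_small : #|left_boundary| <= b.
Hypothesis right_boundary_small : #|right_boundary| <= b.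

Definition boundary_index (S : {set V}) (v : V) : 'I_b.+1 := inord (index v (enum S)).

Definition oindex (S : {set V}) (o : option V) : 'I_b.+1 :=
  if o is Some v then boundary_index S v else ord0.

Lemma boundary_index_inj (S : {set V}) u u' : #|S| <= b -> u \in S ->
  boundary_index S u = boundary_index S u' -> u = u'.
Proof.
move=> hS uS /(congr1 val); rewrite /= !inordK ?ltnS; last 2 first.
- by apply: leq_trans (index_size _ _) _; rewrite -cardE.
- by apply: leq_trans (index_size _ _) _; rewrite -cardE.
have uS' : u \in enum S by rewrite mem_enum.
move=> e; have : index u' (enum S) < size (enum S) by rewrite -e index_mem.
by rewrite index_mem => u'S; rewrite -(nth_index u uS') e nth_index.
Qed.

Lemma incident_left v v' e : PV v -> PV v' -> ~~ PE e ->
  boundary_index left_boundary v = boundary_index left_boundary v' ->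
  incident src dst v e = incident src dst v' e.
Proof.
move=> pv pv' ne ei.
have inB u : PV u -> incident src dst u e -> u \in left_boundary.
  by move=> pu iu; rewrite inE pu; apply/existsP; exists e; rewrite ne.
apply/idP/idP => h.
  by rewrite -(boundary_index_inj left_boundary_small (inB v pv h) ei).
by rewrite -(boundary_index_inj left_boundary_small (inB v' pv' h) (esym ei)).
Qed.

Lemma incident_right e e' v : PE e -> PE e' -> ~~ PV v ->
  boundary_index right_boundary (src e) = boundary_index right_boundary (src e') ->
  boundary_index right_boundary (dst e) = boundary_index right_boundary (dst e') ->
  incident src dst v e = incident src dst v e'.
Proof.
move=> pe pe' nv es ed.
have inB f u : PE f -> ~~ PV u -> incident src dst u f -> u \in right_boundary.
  by move=> pf nu iu; rewrite inE nu; apply/existsP; exists f; rewrite pf.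
have endpoint (g : E -> V) : incident src dst (g e) e -> incident src dst (g e') e' ->
    boundary_index right_boundary (g e) = boundary_index right_boundary (g e') ->
    (v == g e) = (v == g e').
  move=> he he' ei; apply/eqP/eqP => ev; rewrite ev in nv *.
    exact: boundary_index_inj right_boundary_small (inB e _ pe nv he) ei.
  exact: boundary_index_inj right_boundary_small (inB e' _ pe' nv he') (esym ei).
by rewrite /incident (endpoint src) ?(endpoint dst) // /incident eqxx ?orbT.
Qed.

Definition opt_adj (ov : option V) (oe : option E) : bool :=
  if (ov, oe) is (Some v, Some e) then incident src dst v e else false.

Lemma glue_opt_adj (o1 o1' r1 : option V) (o2 o2' r2 : option E) :
  (keep_in PV o1 == None) = (keep_in PV o1' == None) ->
  (keep_in PE o2 == None) = (keep_in PE o2' == None) ->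
  opt_adj (keep_in PV o1) (keep_in PE o2) = opt_adj (keep_in PV o1') (keep_in PE o2') ->
  oindex left_boundary (keep_in PV o1) = oindex left_boundary (keep_in PV o1') ->
  oindex right_boundary (omap src (keep_in PE o2)) =
    oindex right_boundary (omap src (keep_in PE o2')) ->
  oindex right_boundary (omap dst (keep_in PE o2)) =
    oindex right_boundary (omap dst (keep_in PE o2')) ->
  opt_adj (glue_opt PV o1 r1) (glue_opt PE o2 r2) =
    opt_adj (glue_opt PV o1' r1) (glue_opt PE o2' r2).
Proof.
rewrite /glue_opt.
case: (keep_inP PV o1) => [v pv|]; case: (keep_inP PV o1') => [v' pv'|] //;
case: (keep_inP PE o2) => [e pe|]; case: (keep_inP PE o2') => [e' pe'|] //= _ _ h hi hs hd //.
- case: (keep_inP (predC PE) r2) => [f nf|] //.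
  exact: incident_left pv pv' nf hi.
- case: (keep_inP (predC PV) r1) => [u nu|] //.
  exact: incident_right pe pe' nu hs hd.
Qed.

Lemma types_bounded_adj x y : types_bounded (8 * b.+1 ^ 3) (FAdj x y).
Proof.
exists _, (fun a => (keep_in PV (aV a x) == None, keep_in PE (aE a y) == None,
  opt_adj (keep_in PV (aV a x)) (keep_in PE (aE a y)),
  oindex left_boundary (keep_in PV (aV a x)),
  oindex right_boundary (omap src (keep_in PE (aE a y))),
  oindex right_boundary (omap dst (keep_in PE (aE a y))))).
split; first by rewrite !card_prod !card_bool !card_ord /= !expnS expn0; lia.
by move=> a a' [h1 h2 h3 h4 h5 h6] c; apply: glue_opt_adj.
Qed.

Fixpoint type_bound (p : mso2) : nat :=
  match p with
  | FAdj _ _ | FEqV _ _ | FEqE _ _ | FInV _ _ | FInE _ _ => 8 * b.+1 ^ 3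
  | FNeg q => type_bound q
  | FAnd q r => type_bound q * type_bound r
  | FExV _ q | FExE _ q => 2 ^ type_bound q * type_bound q
  | FExVS _ q | FExES _ q => 2 ^ type_bound q
  end.

Lemma atom_bound_ge8 : 8 <= 8 * b.+1 ^ 3.
Proof. by rewrite leq_pmulr // expn_gt0. Qed.

Lemma upd_glue_opt (T : Type) (P : pred T) (f g : nat -> option T) x t : P t ->
  upd (fun z => glue_opt P (f z) (g z)) x (Some t) =
  (fun z => glue_opt P (upd f x (Some t) z) (g z)).
Proof.
move=> pt; apply: functional_extensionality => z.
by rewrite /upd /glue_opt; case: eqP => //= _; rewrite pt.
Qed.

Lemma upd_glue_opt_out (T : Type) (P : pred T) (f g : nat -> option T) x t : ~~ P t ->
  upd (fun z => glue_opt P (f z) (g z)) x (Some t) =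
  (fun z => glue_opt P (upd f x None z) (upd g x (Some t) z)).
Proof.
move=> pt; apply: functional_extensionality => z.
by rewrite /upd /glue_opt; case: eqP => //= _; rewrite pt.
Qed.

Lemma upd_glue_set (T : finType) (P : pred T) (f g : nat -> {set T}) X A :
  upd (fun z => glue_set P (f z) (g z)) X A =
  (fun z => glue_set P (upd f X A z) (upd g X A z)).
Proof.
by apply: functional_extensionality => z; rewrite /upd /glue_set; case: eqP; rewrite ?setID.
Qed.

Lemma glue_set_upd (T : finType) (P : pred T) (f g : nat -> {set T}) X A A' :
  (fun z => glue_set P (upd f X A' z) (upd g X A z)) =
  upd (fun z => glue_set P (f z) (g z)) X (glue_set P A' A).
Proof. by apply: functional_extensionality => z; rewrite /upd; case: eqP. Qed.

Lemma types_bounded_all p : types_bounded (type_bound p) p.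
Proof.
elim: p => [x y|x y|x y|x X|x X|q IH|q IHq r IHr|x q IH|x q IH|X q IH|X q IH] /=.
- exact: types_bounded_adj.
- apply: types_bounded_le atom_bound_ge8 _.
  exact: (@types_bounded_eq _ PV aV _ x y).
- apply: types_bounded_le atom_bound_ge8 _.
  exact: (@types_bounded_eq _ PE aE _ x y).
- apply: (@types_bounded_le 4); first exact: leq_trans _ atom_bound_ge8.
  exact: (@types_bounded_mem _ PV aV aVS _ x X).
- apply: (@types_bounded_le 4); first exact: leq_trans _ atom_bound_ge8.
  exact: (@types_bounded_mem _ PE aE aES _ x X).
- exact: types_bounded_neg.
- exact: types_bounded_and.
- apply: (@types_bounded_exists_obj _ PV (fun a => setV a x)) IH => // a c v pv.
    by rewrite /setV /glue /= upd_glue_opt.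
  by rewrite /setV /glue /= upd_glue_opt_out.
- apply: (@types_bounded_exists_obj _ PE (fun a => setE a x)) IH => // a c e pe.
    by rewrite /setE /glue /= upd_glue_opt.
  by rewrite /setE /glue /= upd_glue_opt_out.
- apply: (@types_bounded_exists_set _ (fun a => setVS a X)) IH => // a c A.
    by rewrite /setVS /glue /= upd_glue_set.
  by move=> A'; exists (glue_set PV A' A); rewrite /setVS /glue /= glue_set_upd.
- apply: (@types_bounded_exists_set _ (fun a => setES a X)) IH => // a c A.
    by rewrite /setES /glue /= upd_glue_set.
  by move=> A'; exists (glue_set PE A' A); rewrite /setES /glue /= glue_set_upd.
Qed.
End Gluing.
End Assignments.

(** * Tower bounds on the number of types *)

Lemma tower_S n : tower n.+1 = 2 ^ (2 * tower n). Proof. by []. Qed.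

Lemma tower_lt_S n : tower n < tower n.+1.
Proof.
rewrite tower_S; apply: leq_trans (ltn_expl (tower n) (ltnSn 1)) _.
by rewrite leq_exp2l // leq_pmull.
Qed.

Lemma leq_tower m n : m <= n -> tower m <= tower n.
Proof.
move=> /subnK <-; elim: (n - m) => [|k IH] //.
by rewrite addSn; apply: leq_trans IH (ltnW (tower_lt_S _)).
Qed.

Lemma ltn_tower n : n < tower n.
Proof. by elim: n => [|n IH] //; apply: leq_trans (tower_lt_S n). Qed.

Lemma tower_expn_mul n : 2 ^ tower n * tower n <= tower n.+1.
Proof.
rewrite tower_S mul2n -addnn expnD leq_mul //.
exact: ltnW (ltn_expl _ (ltnSn 1)).
Qed.

Lemma tower_sq n : tower n * tower n <= tower n.+1.
Proof.
apply: leq_trans (tower_expn_mul n); rewrite leq_mul2r ltnW ?orbT //.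
exact: ltn_expl.
Qed.

Lemma tower_expn n : 2 ^ tower n <= tower n.+1.
Proof. by rewrite tower_S leq_exp2l // leq_pmull. Qed.

Lemma atom_bound_tower b : 8 * b.+1 ^ 3 <= tower (3 + b).
Proof.
have h1 : 8 * b.+1 ^ 3 <= 2 ^ (3 * b + 3).
  rewrite expnD mulnC leq_mul // (mulnC 3 b) expnM leq_exp2r //.
  exact: ltn_expl b (ltnSn 1).
apply: leq_trans h1 _; rewrite add3n tower_S leq_exp2l //.
have := ltn_tower b.+1; have := ltn_expl (2 * tower b.+1) (ltnSn 1); rewrite -tower_S; lia.
Qed.

Lemma type_bound_tower b p : type_bound b p <= tower (msize p + b).
Proof.
elim: p => [x y|x y|x y|x X|x X|q IH|q IHq r IHr|x q IH|x q IH|X q IH|X q IH] /=;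
  try exact: atom_bound_tower; rewrite -tower_S.
- exact: leq_trans IH (ltnW (tower_lt_S _)).
- apply: leq_trans (leq_mul IHq IHr) _.
  apply: leq_trans (leq_mul (@leq_tower _ (msize q + msize r + b) _)
                            (@leq_tower _ (msize q + msize r + b) _)) _; try lia.
  exact: tower_sq.
- exact: leq_trans (leq_mul (leq_pexp2l _ IH) IH) (tower_expn_mul _).
- exact: leq_trans (leq_mul (leq_pexp2l _ IH) IH) (tower_expn_mul _).
- exact: leq_trans (leq_pexp2l _ IH) (tower_expn _).
- exact: leq_trans (leq_pexp2l _ IH) (tower_expn _).
Qed.

(** * Cutting along a path decomposition *)

Lemma take_flatten_split (T : Type) (ss : seq (seq T)) l :
  exists j r, take l (flatten ss) = flatten (take j ss) ++ take r (nth [::] ss j).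
Proof.
elim: ss l => [|s ss IH] l /=; first by exists 0, 0.
case: (leqP l (size s)) => hs.
  exists 0, l; rewrite /= take_cat; case: ltnP => // hs'.
  by rewrite (_ : l = size s) ?subnn ?take0 ?cats0 ?take_size //; apply/eqP; rewrite eqn_leq hs.
have [j [r ht]] := IH (l - size s).
by exists j.+1, r; rewrite /= take_cat ltnNge (ltnW hs) /= ht catA.
Qed.

Lemma pick_eq1 (T : finType) (p : pred T) u : (forall t, p t = (t == u)) -> [pick t | p t] = Some u.
Proof.
move=> h; case: pickP => [t|/(_ u)]; last by rewrite h eqxx.
by rewrite h => /eqP ->.
Qed.

Lemma card_splice (T : finType) (P f g : pred T) :
  #|[set t | if P t then f t else g t]| = #|[set t | P t && f t]| + #|[set t | ~~ P t && g t]|.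
Proof.
rewrite -(cardsID [set t | P t]); congr (_ + _); apply: eq_card => t;
  by rewrite !inE; case: (P t); rewrite ?andbT ?andbF.
Qed.

Lemma pick_splice (T : finType) (P f g : pred T) :
  #|[set t | if P t then f t else g t]| = 1 ->
  [pick t | if P t then f t else g t] = glue_opt P [pick t | P t && f t] [pick t | ~~ P t && g t].
Proof.
move/eqP/cards1P => [u hu].
have hm t : (if P t then f t else g t) = (t == u).
  by have := congr1 (fun S : {set T} => t \in S) hu; rewrite !inE.
rewrite (pick_eq1 hm) /glue_opt; have := hm u; rewrite eqxx.
have [pu fu|pu gu] := ifPn.
  rewrite (@pick_eq1 _ _ u) /keep_in ?pu // => t.
  by apply/idP/eqP => [/andP [pt ft]|->]; [apply/eqP; rewrite -hm pt | rewrite pu fu].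
case: pickP => [t /andP [pt ft]|_] /=.
  by have := hm t; rewrite pt ft => /esym/eqP et; rewrite -et pt in pu.
rewrite (@pick_eq1 _ _ u) /keep_in /= ?pu // => t.
by apply/idP/eqP => [/andP [pt gt]|->]; [apply/eqP; rewrite -hm (negbTE pt) | rewrite pu gu].
Qed.

Definition tabulate (A : Type) (B : Type) m (a0 : A) (s : seq A) (f : A -> B) : {ffun 'I_m -> B} :=
  [ffun i : 'I_m => f (nth a0 s i)].

Lemma tabulate_inj (A : eqType) (B : Type) m (a0 : A) (s : seq A) (f f' : A -> B) :
  size s <= m -> tabulate m a0 s f = tabulate m a0 s f' -> forall x, x \in s -> f x = f' x.
Proof.
move=> sm e x xs; have il : index x s < m by apply: leq_trans sm; rewrite index_mem.
by have := congr1 (fun t : {ffun 'I_m -> B} => t (Ordinal il)) e; rewrite !ffunE /= nth_index.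
Qed.

Section PathOrder.
Variables (V E : finType) (src dst : E -> V) (bags : seq {set V}) (w : nat) (v0 : V).
Hypothesis bags_decomp : path_decomp src dst bags.
Hypothesis bags_width : pd_width bags = w.

Local Notation elem := (V + E)%type.

Definition first_bag (o : elem) : nat :=
  match o with
  | inl v => find (fun B : {set V} => v \in B) bags
  | inr e => find (fun B : {set V} => (src e \in B) && (dst e \in B)) bags
  end.

Definition elem_order : seq elem :=
  sort (fun a b => first_bag a <= first_bag b) (enum {: elem}).

Lemma uniq_elem_order : uniq elem_order. Proof. by rewrite sort_uniq enum_uniq. Qed.

Lemma mem_elem_order o : o \in elem_order. Proof. by rewrite mem_sort mem_enum. Qed.

Lemma size_elem_order : size elem_order = #|V| + #|E|.
Proof. by rewrite size_sort -cardE card_sum. Qed.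

Lemma index_elem_order_lt o : index o elem_order < size elem_order.
Proof. by rewrite index_mem mem_elem_order. Qed.

Lemma first_bag_mono o o' : index o elem_order <= index o' elem_order ->
  first_bag o <= first_bag o'.
Proof.
move=> le; have sorted_order : sorted (fun a b => first_bag a <= first_bag b) elem_order.
  by apply: sort_sorted => a b; exact: leq_total.
have tr : transitive (fun a b : elem => first_bag a <= first_bag b).
  by move=> ? ? ?; exact: leq_trans.
have := sorted_leq_nth tr (fun a => leqnn _) (inl v0) sorted_order (index o elem_order)
  (index o' elem_order); rewrite !nth_index ?mem_elem_order //.
by apply; rewrite ?inE ?index_elem_order_lt.
Qed.

Definition cut_bag j : nat := first_bag (nth (inl v0) elem_order j.-1).

Lemma cut_bag_between j o o' : index o elem_order < j -> j <= index o' elem_order ->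
  first_bag o <= cut_bag j <= first_bag o'.
Proof.
move=> hj hj'; have lt : j.-1 < size elem_order.
  by apply: leq_ltn_trans (index_elem_order_lt o'); lia.
have ej : index (nth (inl v0) elem_order j.-1) elem_order = j.-1.
  by rewrite index_uniq // uniq_elem_order.
by rewrite /cut_bag !first_bag_mono // ej; lia.
Qed.

Lemma first_bag_vertex v :
  v \in nth set0 bags (first_bag (inl v)) /\ first_bag (inl v) < size bags.
Proof.
have h : has (fun B : {set V} => v \in B) bags.
  by have [B Bin vB] := bags_decomp.1 v; apply/hasP; exists B.
by split; [exact: (nth_find set0 h) | rewrite /= -has_find].
Qed.

Lemma first_bag_vertex_min v i : v \in nth set0 bags i -> first_bag (inl v) <= i.
Proof. by move=> h; rewrite leqNgt; apply/negP => /(before_find set0); rewrite h. Qed.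

Lemma first_bag_edge e :
  (src e \in nth set0 bags (first_bag (inr e))) && (dst e \in nth set0 bags (first_bag (inr e)))
  /\ first_bag (inr e) < size bags.
Proof.
have h : has (fun B : {set V} => (src e \in B) && (dst e \in B)) bags.
  by have [B Bin vB] := bags_decomp.2.1 e; apply/hasP; exists B.
by split; [exact: (nth_find set0 h) | rewrite /= -has_find].
Qed.

Lemma incident_first_bag v e : incident src dst v e -> v \in nth set0 bags (first_bag (inr e)).
Proof. by have [/andP [h1 h2] _] := first_bag_edge e; case/orP => /eqP ->. Qed.

Lemma card_bag_le k : #|nth set0 bags k| <= w.+1.
Proof.
case: (ltnP k (size bags)) => hk; last by rewrite nth_default // cards0.
have := @leq_bigmax_seq _ bags predT (fun B : {set V} => #|B|) _ (mem_nth set0 hk) isT.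
by move: bags_width; rewrite /pd_width => <- h; apply: leq_trans h (leqSpred _).
Qed.

Definition earlyV j (v : V) := index (inl v) elem_order < j.
Definition earlyE j (e : E) := index (inr e) elem_order < j.

(* Both boundaries of the cut after the first [j] elements lie in the bag [cut_bag j]. *)
Lemma boundaries_small j :
  #|left_boundary src dst (earlyV j) (earlyE j)| <= w.+1 /\
  #|right_boundary src dst (earlyV j) (earlyE j)| <= w.+1.
Proof.
have interp := bags_decomp.2.2.
suff [s1 s2] : left_boundary src dst (earlyV j) (earlyE j) \subset nth set0 bags (cut_bag j) /\
               right_boundary src dst (earlyV j) (earlyE j) \subset nth set0 bags (cut_bag j).
  by split; [exact: leq_trans (subset_leq_card s1) (card_bag_le _)
            | exact: leq_trans (subset_leq_card s2) (card_bag_le _)].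
split; apply/subsetP => v; rewrite inE => /andP [pv /existsP [e /andP [pe ive]]];
  rewrite /earlyV /earlyE -?leqNgt in pv pe.
- have /andP [k1 k2] := cut_bag_between pv pe.
  have [kv _] := first_bag_vertex v; have [_ ke] := first_bag_edge e.
  exact: interp _ _ _ _ k1 k2 ke kv (incident_first_bag ive).
- have /andP [k1 k2] := cut_bag_between pe pv.
  have k3 := first_bag_vertex_min (incident_first_bag ive).
  have -> : cut_bag j = first_bag (inl v) by apply/eqP; rewrite eqn_leq k2 (leq_trans k3 k1).
  by have [] := first_bag_vertex v.
Qed.
End PathOrder.

Section DecisionOrder.
Variables (V E : finType) (src dst : E -> V) (bags : seq {set V}) (w : nat) (phi : mso2) (v0 : V).
Hypothesis bags_decomp : path_decomp src dst bags.
Hypothesis bags_width : pd_width bags = w.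

Local Notation elem := (V + E)%type.
Local Notation m := (msize phi).
Local Notation elem_order := (elem_order src dst bags).

Definition free_list (P : pred nat) : seq nat := [seq z <- iota 0 (var_bound phi) | P z].

Lemma mem_free_list (P : pred nat) z :
  (forall z, P z -> [|| freeV phi z, freeE phi z, freeVS phi z | freeES phi z]) ->
  (z \in free_list P) = P z.
Proof.
move=> hP; rewrite mem_filter mem_iota add0n /=.
by case h: (P z) => //=; apply/free_lt_var_bound/hP.
Qed.

Lemma mem_fvV z : (z \in free_list (freeV phi)) = freeV phi z.
Proof. by apply: mem_free_list => ? ->. Qed.
Lemma mem_fvE z : (z \in free_list (freeE phi)) = freeE phi z.
Proof. by apply: mem_free_list => ? ->; rewrite orbT. Qed.
Lemma mem_fvVS z : (z \in free_list (freeVS phi)) = freeVS phi z.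
Proof. by apply: mem_free_list => ? ->; rewrite !orbT. Qed.
Lemma mem_fvES z : (z \in free_list (freeES phi)) = freeES phi z.
Proof. by apply: mem_free_list => ? ->; rewrite !orbT. Qed.

Definition dvars_of (o : elem) : seq (dvar V E) :=
  match o with
  | inl v => [seq dObjV E x v | x <- free_list (freeV phi)] ++
             [seq dSetV E X v | X <- free_list (freeVS phi)]
  | inr e => [seq dObjE V x e | x <- free_list (freeE phi)] ++
             [seq dSetE V X e | X <- free_list (freeES phi)]
  end.

Definition elem_of_dvar (d : dvar V E) : elem :=
  match d with
  | inl (inl (_, v)) | inr (inl (_, v)) => inl v
  | inl (inr (_, e)) | inr (inr (_, e)) => inr e
  end.

Lemma mem_dvars_of o d : (d \in dvars_of o) = (elem_of_dvar d == o) && Dvars phi d.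
Proof.
apply/idP/andP => [|[/eqP <-]].
  case: o => [v|e] /=; rewrite mem_cat => /orP [] /mapP [x xin ->] /=; split => //;
  by rewrite -?mem_fvV -?mem_fvVS -?mem_fvE -?mem_fvES.
case: d => [[[x u]|[x u]]|[[x u]|[x u]]] /= h; rewrite mem_cat; apply/orP;
  [left|left|right|right]; apply/mapP; exists x => //;
  by rewrite ?mem_fvV ?mem_fvE ?mem_fvVS ?mem_fvES.
Qed.

Lemma size_dvars_of o : size (dvars_of o) <= m.
Proof.
case: o => [v|e]; rewrite size_cat !size_map !size_filter.
  exact: count_free_vertex (iota_uniq _ _).
exact: count_free_edge (iota_uniq _ _).
Qed.

Lemma uniq_dvars_of o : uniq (dvars_of o).
Proof.
case: o => [v|e] /=; rewrite cat_uniq !map_inj_uniq ?filter_uniq ?iota_uniq //=;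
  try by move=> x y [].
all: by rewrite andbT; apply/hasP => -[d /mapP [X _ ->] /mapP [x _]].
Qed.

Definition var_order : seq (dvar V E) := flatten [seq dvars_of o | o <- elem_order].

Lemma mem_var_order d : (d \in var_order) = Dvars phi d.
Proof.
apply/flattenP/idP => [[s /mapP [o _ ->]]|h]; first by rewrite mem_dvars_of => /andP [].
exists (dvars_of (elem_of_dvar d)); last by rewrite mem_dvars_of eqxx.
exact/map_f/mem_elem_order.
Qed.

Lemma uniq_var_order : uniq var_order.
Proof.
rewrite /var_order; elim: elem_order (uniq_elem_order src dst bags) => //= a s IH /andP [ans us].
rewrite cat_uniq uniq_dvars_of IH // andbT.
apply/hasP => -[d /flattenP [t /mapP [o os ->] dt] dat].
move: dt dat; rewrite !mem_dvars_of => /andP [/eqP e1 _] /andP [/eqP e2 _].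
by move: ans; rewrite -e2 e1 os.
Qed.

Lemma size_var_order : size var_order <= m * (#|V| + #|E|).
Proof.
rewrite size_flatten -(size_elem_order src dst bags) /shape -map_comp mulnC.
by apply: sumn_map_leq => o _; exact: size_dvars_of.
Qed.

Lemma Ffun_eq_on_Dvars d d' : (forall x, Dvars phi x -> d x = d' x) ->
  Ffun src dst phi d <-> Ffun src dst phi d'.
Proof.
move=> h.
have eV x : freeV phi x -> [set v | d (dObjV E x v)] = [set v | d' (dObjV E x v)].
  by move=> fx; apply/setP => v; rewrite !inE h.
have eE x : freeE phi x -> [set e | d (dObjE V x e)] = [set e | d' (dObjE V x e)].
  by move=> fx; apply/setP => e; rewrite !inE h.
have cons : consistent phi d <-> consistent phi d'.
  split => -[h1 h2]; split => x fx.
  - by rewrite -eV // h1.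
  - by rewrite -eE // h2.
  - by rewrite eV // h1.
  - by rewrite eE // h2.
suff ms : msat src dst (encV phi d) (encE phi d) (encVS d) (encES d) phi =
          msat src dst (encV phi d') (encE phi d') (encVS d') (encES d') phi.
  by rewrite /Ffun ms; split => -[/cons c s].
apply: msat_eq_free => z hz.
- by rewrite /encV hz; apply: eq_pick => v /=; rewrite h.
- by rewrite /encE hz; apply: eq_pick => e /=; rewrite h.
- by apply/setP => v; rewrite !inE h.
- by apply/setP => e; rewrite !inE h.
Qed.

Definition splice_at j (d g : dvar V E -> bool) (y : dvar V E) : bool :=
  if index (elem_of_dvar y) elem_order < j then d y else g y.

Definition left_asg j (d : dvar V E -> bool) : asg V E :=
  Asg (fun x => [pick v | earlyV src dst bags j v && d (dObjV E x v)])
      (fun x => [pick e | earlyE src dst bags j e && d (dObjE V x e)]) (encVS d) (encES d).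

Definition right_asg j (g : dvar V E -> bool) : asg V E :=
  Asg (fun x => [pick v | ~~ earlyV src dst bags j v && g (dObjV E x v)])
      (fun x => [pick e | ~~ earlyE src dst bags j e && g (dObjE V x e)]) (encVS g) (encES g).

Lemma sat_splice_at j d g : consistent phi (splice_at j d g) ->
  msat src dst (encV phi (splice_at j d g)) (encE phi (splice_at j d g))
       (encVS (splice_at j d g)) (encES (splice_at j d g)) phi =
  sat src dst (glue (earlyV src dst bags j) (earlyE src dst bags j)
                    (left_asg j d) (right_asg j g)) phi.
Proof.
move=> [c1 c2]; apply: msat_eq_free => z hz /=.
- by rewrite /encV hz; apply: (pick_splice (P := earlyV src dst bags j)); exact: c1.
- by rewrite /encE hz; apply: (pick_splice (P := earlyE src dst bags j)); exact: c2.
- by apply/setP => v; rewrite !inE /splice_at /earlyV /=; case: ifP; rewrite ?andbT ?andbF ?orbF.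
- by apply/setP => e; rewrite !inE /splice_at /earlyE /=; case: ifP; rewrite ?andbT ?andbF ?orbF.
Qed.

Definition count_class (n : nat) : bool * bool := (n == 0, n == 1).

Lemma count_class_add1 n n' k : count_class n = count_class n' -> n + k = 1 -> n' + k = 1.
Proof.
case=> e0 e1 h; have [n0|n1] : n = 0 \/ n = 1 by lia.
  by move: e0; rewrite n0 eqxx => /esym/eqP; lia.
by move: e1; rewrite n1 eqxx => /esym/eqP; lia.
Qed.

Definition left_countV j d x := #|[set v | earlyV src dst bags j v && d (dObjV E x v)]|.
Definition left_countE j d x := #|[set e | earlyE src dst bags j e && d (dObjE V x e)]|.

Lemma consistent_splice_at j d d' g :
  (forall x, freeV phi x -> count_class (left_countV j d x) = count_class (left_countV j d' x)) ->
  (forall x, freeE phi x -> count_class (left_countE j d x) = count_class (left_countE j d' x)) ->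
  consistent phi (splice_at j d g) -> consistent phi (splice_at j d' g).
Proof.
move=> hV hE [h1 h2]; split => x fx.
  move: (h1 x fx) (card_splice (earlyV src dst bags j) (fun v => d' (dObjV E x v))
                                (fun v => g (dObjV E x v))).
  rewrite (card_splice (earlyV src dst bags j) (fun v => d (dObjV E x v))
                       (fun v => g (dObjV E x v))).
  by move=> /(count_class_add1 (hV x fx)) + ->.
move: (h2 x fx) (card_splice (earlyE src dst bags j) (fun e => d' (dObjE V x e))
                              (fun e => g (dObjE V x e))).
rewrite (card_splice (earlyE src dst bags j) (fun e => d (dObjE V x e))
                     (fun e => g (dObjE V x e))).
by move=> /(count_class_add1 (hE x fx)) + ->.
Qed.

Lemma cut_types j : exists (T : finType) (tau : (dvar V E -> bool) -> T),
  #|T| <= type_bound w.+1 phi * 4 ^ m * 4 ^ m /\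
  forall d d', tau d = tau d' -> forall g,
    Ffun src dst phi (splice_at j d g) <-> Ffun src dst phi (splice_at j d' g).
Proof.
have [bl br] := boundaries_small v0 bags_decomp bags_width j.
have [T [tau [hT hR]]] := types_bounded_all bl br phi.
have sizeV : size (free_list (freeV phi)) <= m.
  rewrite size_filter; apply: leq_trans (count_free_vertex phi (iota_uniq _ _)).
  exact: leq_addr.
have sizeE : size (free_list (freeE phi)) <= m.
  rewrite size_filter; apply: leq_trans (count_free_edge phi (iota_uniq _ _)).
  exact: leq_addr.
exists _, (fun d => (tau (left_asg j d),
  tabulate m 0 (free_list (freeV phi)) (fun x => count_class (left_countV j d x)),
  tabulate m 0 (free_list (freeE phi)) (fun x => count_class (left_countE j d x)))).
split; first by rewrite !(card_prod, card_ffun, card_bool, card_ord) !leq_mul.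
move=> d d' [et /(tabulate_inj sizeV) hV /(tabulate_inj sizeE) hE] g.
have {}hV x : freeV phi x -> count_class (left_countV j d x) = count_class (left_countV j d' x).
  by move=> fx; apply: hV; rewrite mem_fvV.
have {}hE x : freeE phi x -> count_class (left_countE j d x) = count_class (left_countE j d' x).
  by move=> fx; apply: hE; rewrite mem_fvE.
rewrite /Ffun; split => -[c s].
  have c' := consistent_splice_at hV hE c.
  by split => //; rewrite sat_splice_at // -(hR _ _ et) -sat_splice_at.
have c' := consistent_splice_at (fun x fx => esym (hV x fx)) (fun x fx => esym (hE x fx)) c.
by split => //; rewrite sat_splice_at // (hR _ _ et) -sat_splice_at.
Qed.

Lemma mem_flatten_take_dvars j y : Dvars phi y ->
  (y \in flatten (take j [seq dvars_of o | o <- elem_order])) =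
  (index (elem_of_dvar y) elem_order < j).
Proof.
move=> hy; rewrite -map_take; apply/flattenP/idP.
  move=> [t /mapP [o oin ->]]; rewrite mem_dvars_of => /andP [/eqP eo _].
  by move: oin; rewrite in_take ?mem_elem_order // eo.
move=> h; exists (dvars_of (elem_of_dvar y)); last by rewrite mem_dvars_of eqxx.
by apply: map_f; rewrite in_take // mem_elem_order.
Qed.

(* A prefix of [var_order] covers the variables of the first [j] elements and part of the
   next one. *)
Lemma prefix_types l :
  exists (T : finType) (tau : (dvar V E -> bool) -> T),
    #|T| <= type_bound w.+1 phi * 4 ^ m * 4 ^ m * 2 ^ m /\
    forall d d', tau d = tau d' -> prefix_equiv (Ffun src dst phi) var_order l d d'.
Proof.
have [j [r ht]] := take_flatten_split (map dvars_of elem_order) l.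
set R := take r (nth [::] [seq dvars_of o | o <- elem_order] j).
have sR : size R <= m.
  rewrite size_take; apply: leq_trans (geq_minr _ _) _.
  case: (ltnP j (size elem_order)) => hjo; last by rewrite nth_default // size_map.
  by rewrite (nth_map (inl v0)) //; exact: size_dvars_of.
have [T [tau [hT hc]]] := cut_types j.
exists _, (fun d => (tau d, tabulate m (dObjV E 0 v0) R d)).
split; first by rewrite card_prod card_ffun card_bool card_ord leq_mul.
move=> d d' [et /(tabulate_inj sR) agR] g.
pose g2 y := if y \in R then d y else g y.
have splice_eq d0 : {in R, d0 =1 d} ->
    Ffun src dst phi (splice var_order l d0 g) <-> Ffun src dst phi (splice_at j d0 g2).
  move=> h0; apply: Ffun_eq_on_Dvars => y hy.
  rewrite /splice /splice_at ht mem_cat (mem_flatten_take_dvars _ hy).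
  case: (index (elem_of_dvar y) elem_order < j) => //=.
  by rewrite /g2; case: ifP => // yR; rewrite h0.
have agR' : {in R, d' =1 d} by move=> y /agR.
split => [/(splice_eq d (fun _ _ => erefl))/(hc _ _ et g2)/(splice_eq d' agR')|
          /(splice_eq d' agR')/(hc _ _ et g2)/(splice_eq d (fun _ _ => erefl))] //.
Qed.
End DecisionOrder.

Lemma class_count_le_fbound w p n N : 0 < n -> N <= msize p * n ->
  type_bound w.+1 p * 4 ^ msize p * 4 ^ msize p * 2 ^ msize p * N.+1 <=
  fbound (w + msize p) * n.
Proof.
move=> n_gt0 hN; set m := msize p.
have h1 : type_bound w.+1 p <= tower (w + m).+1.
  by apply: leq_trans (type_bound_tower _ _) (leq_tower _); rewrite addnS addnC.
have h2 : 4 ^ m * 4 ^ m * 2 ^ m <= 32 ^ (w + m).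
  by rewrite -!expnMn leq_exp2l // leq_addl.
have h3 : N.+1 <= (w + m).+1 * n.
  by rewrite mulSn addnC -addn1 leq_add // (leq_trans hN) // leq_mul2r leq_addl orbT.
suff : type_bound w.+1 p * (4 ^ m * 4 ^ m * 2 ^ m) * N.+1 <= fbound (w + m) * n.
  by rewrite !mulnA.
by apply: leq_trans (leq_mul (leq_mul h1 h2) h3) _; rewrite /fbound mulnA.
Qed.

Theorem mainTheorem2 :
  exists f : nat -> nat, computable f /\
  forall (V E : finType) (src dst : E -> V),
    simple_graph src dst -> 0 < #|V| ->
  forall w : nat, is_pathwidth src dst w ->
  forall phi : mso2,
  exists B : obdd (dvar V E),
    obdd_computes B (Dvars phi) (Ffun src dst phi) /\
    osize B <= f (w + msize phi) * (#|V| + #|E|).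
Proof.
exists fbound; split; first exact: computable_fbound.
move=> V E src dst _ V_gt0 w [[bags [hpd hw]] _] phi.
have [v0 _] := card_gt0P V_gt0.
have ds_D x : x \in var_order src dst bags phi -> Dvars phi x by rewrite mem_var_order.
have F_ds d d' : {in var_order src dst bags phi, d =1 d'} ->
    Ffun src dst phi d <-> Ffun src dst phi d'.
  by move=> h; apply: Ffun_eq_on_Dvars => x hx; apply: h; rewrite mem_var_order.
have [B [hB hs]] := obdd_of_prefix_classes (dObjV E 0 v0) (uniq_var_order src dst bags phi)
  ds_D F_ds (prefix_types phi v0 hpd hw).
exists B; split => //; apply: leq_trans hs (class_count_le_fbound _ _ _) => //.
  by rewrite addn_gt0 V_gt0.
exact: size_var_order.
Qed.
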